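(* Let $A$ be an algebra over a field $\Bbbk$. Then $A$ admits a normalized nearly Frobenius coproduct if and only if $A$ has Hochschild cohomological dimension $0$.
   Context: Algebras are associative and unital; tensor products over $\Bbbk$; $m$ denotes multiplication. A nearly Frobenius coproduct on $A$ is a $\Bbbk$-linear map $\Delta:A\to A\otimes A$ with $\Delta\circ m=(1\otimes m)\circ(\Delta\otimes 1)=(m\otimes 1)\circ(1\otimes\Delta)$; it is normalized if $m\circ\Delta=\operatorname{Id}_A$. $A$ has Hochschild cohomological dimension $0$ if the Hochschild cohomology $H^n(A,M)$ vanishes for all $n\ge 1$ and all $A$-bimodules $M$. *)

From HB Require Import structures.
From mathcomp Require Import all_boot all_order all_algebra.
Set Implicit Arguments. Unset Strict Implicit. Unset Printing Implicit Defensive.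
Import GRing.Theory.
Local Open Scope ring_scope.

Section Defs.
Variables (R : fieldType) (A : algType R).

Definition bilinearAA (N : lmodType R) (beta : A -> A -> N) : Prop :=
  (forall (c : R) (a a' b : A), beta (c *: a + a') b = c *: beta a b + beta a' b) /\
  (forall (c : R) (a b b' : A), beta a (c *: b + b') = c *: beta a b + beta a b').

(* A formal sum  \sum_i x_i (x) y_i  is represented by the list of pairs (x_i, y_i). *)
Definition tens := seq (A * A).

(* Equality in A (x) A : the tensor product is the quotient of formal sums by
   the kernel of all bilinear maps (universal property). *)
Definition teq (s t : tens) : Prop :=
  forall (N : lmodType R) (beta : A -> A -> N), bilinearAA beta ->
    \sum_(p <- s) beta p.1 p.2 = \sum_(p <- t) beta p.1 p.2.

Definition tscale (c : R) (s : tens) : tens := [seq (c *: p.1, p.2) | p <- s].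

Definition tmul (s : tens) : A := \sum_(p <- s) p.1 * p.2.

Definition tlinear (D : A -> tens) : Prop :=
  forall (c : R) (a b : A), teq (D (c *: a + b)) (tscale c (D a) ++ D b).

(* Nearly Frobenius coproduct: Delta o m = (1 (x) m)(Delta (x) 1) = (m (x) 1)(1 (x) Delta),
   as maps A (x) A -> A (x) A; all three are linear, so it suffices to compare
   them on pure tensors a (x) b. *)
Definition nearly_frobenius (D : A -> tens) : Prop :=
  tlinear D /\
  forall a b : A,
    teq (D (a * b)) [seq (p.1, p.2 * b) | p <- D a] /\
    teq (D (a * b)) [seq (a * p.1, p.2) | p <- D b].

Definition normalized (D : A -> tens) : Prop := forall a : A, tmul (D a) = a.

Definition bimodule (M : lmodType R) (la : A -> M -> M) (ra : M -> A -> M) : Prop :=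
  (forall (c : R) (a a' : A) (m : M), la (c *: a + a') m = c *: la a m + la a' m)
  /\ (forall (c : R) (a : A) (m m' : M), la a (c *: m + m') = c *: la a m + la a m')
  /\ (forall (c : R) (a a' : A) (m : M), ra m (c *: a + a') = c *: ra m a + ra m a')
  /\ (forall (c : R) (a : A) (m m' : M), ra (c *: m + m') a = c *: ra m a + ra m' a)
  /\ (forall (a b : A) (m : M), la (a * b) m = la a (la b m)) /\
      (forall m : M, la 1 m = m)
  /\ (forall (a b : A) (m : M), ra m (a * b) = ra (ra m a) b) /\
      (forall m : M, ra m 1 = m)
  /\ (forall (a b : A) (m : M), la a (ra m b) = ra (la a m) b).

Definition upd n (x : 'I_n -> A) (i : 'I_n) (a : A) : 'I_n -> A :=
  fun j => if j == i then a else x j.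

Definition multilinear (M : lmodType R) n (f : ('I_n -> A) -> M) : Prop :=
  forall (x : 'I_n -> A) (i : 'I_n) (c : R) (a b : A),
    f (upd x i (c *: a + b)) = c *: f (upd x i a) + f (upd x i b).

(* (a_0, ..., a_n) |-> (a_0, ..., a_i a_{i+1}, ..., a_n)   (0 <= i < n) *)
Definition merge n (x : 'I_n.+1 -> A) (i : nat) : 'I_n -> A :=
  fun j => if (j < i)%N then x (inord j)
           else if j == i :> nat then x (inord j) * x (inord j.+1)
           else x (inord j.+1).

Definition hoch_d (M : lmodType R) (la : A -> M -> M) (ra : M -> A -> M) n
    (f : ('I_n -> A) -> M) : ('I_n.+1 -> A) -> M :=
  fun x =>
    la (x ord0) (f (fun j => x (lift ord0 j)))
    + \sum_(i < n) (-1) ^+ i.+1 *: f (merge x i)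
    + (-1) ^+ n.+1 *: ra (f (fun j => x (widen_ord (leqnSn n) j))) (x ord_max).

(* H^{n+1}(A, M) = 0 : every multilinear (n+1)-cocycle is a coboundary of a
   multilinear n-cochain. *)
Definition hochschild_vanishes (M : lmodType R) (la : A -> M -> M) (ra : M -> A -> M)
    (n : nat) : Prop :=
  forall f : ('I_n.+1 -> A) -> M, multilinear f ->
    (forall x, hoch_d la ra f x = 0) ->
    exists g : ('I_n -> A) -> M, multilinear g /\ forall x, f x = hoch_d la ra g x.

Definition hochschild_dim0 : Prop :=
  forall (M : lmodType R) (la : A -> M -> M) (ra : M -> A -> M),
    bimodule la ra -> forall n : nat, hochschild_vanishes la ra n.

End Defs.

From Pilot Require Import Defs.
From HB Require Import structures.
From mathcomp Require Import all_boot all_order all_algebra.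
From Stdlib Require Import ClassicalEpsilon FunctionalExtensionality PropExtensionality.
Set Implicit Arguments. Unset Strict Implicit. Unset Printing Implicit Defensive.
Import GRing.Theory.
Local Open Scope ring_scope.

(* A normalized nearly Frobenius coproduct D is determined by e = D 1: the two
   coproduct identities give a e = D a = e a, and normalization gives m e = 1, so
   e is a separability element; conversely D a := a e is such a coproduct.
   A separability element e = sum e' (x) e'' yields the contracting homotopy
   (h f)(a_1, ..., a_n) = sum e' f(e'', a_1, ..., a_n), with h d + d h = id in
   positive degrees, so every cocycle is a coboundary.  Conversely, vanishing of
   H^1 with coefficients in Omega = ker (m : A (x) A -> A) makes the derivation
   a |-> a (x) 1 - 1 (x) a inner, say equal to a |-> a w - w a, and then
   1 (x) 1 - w is a separability element. *)

Section LinearFor.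
Variables (R : pzRingType) (U V : lmodType R) (h : U -> V).
Hypothesis h_linear : linear h.

Let hL : {linear U -> V} := HB.pack h (GRing.isLinear.Build R U V *:%R h h_linear).

Lemma linD : {morph h : x y / x + y}. Proof. exact: (linearD hL). Qed.
Lemma lin0 : h 0 = 0. Proof. exact: (linear0 hL). Qed.
Lemma linN : {morph h : x / - x}. Proof. exact: (linearN hL). Qed.
Lemma linB : {morph h : x y / x - y}. Proof. exact: (linearB hL). Qed.
Lemma linZ c : {morph h : x / c *: x}. Proof. exact: (linearZZ hL). Qed.
Lemma lin_sum (I : Type) (r : seq I) (F : I -> U) :
  h (\sum_(i <- r) F i) = \sum_(i <- r) h (F i).
Proof. exact: (linear_sum hL). Qed.
End LinearFor.

Section TensorSquare.
Variables (R : fieldType) (A : algType R).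

Record bilin (N : lmodType R) := Bilin {
  bilin_fun :> A -> A -> N;
  bilin_bilinear : bilinearAA bilin_fun }.

Section BilinearMaps.
Variables (N : lmodType R) (beta : bilin N).

Lemma bilin_linearl b : linear (beta^~ b).
Proof. by move=> c a a'; apply: (bilin_bilinear beta).1. Qed.
Lemma bilin_linearr a : linear (beta a).
Proof. by move=> c b b'; apply: (bilin_bilinear beta).2. Qed.

Lemma bilinDl a a' b : beta (a + a') b = beta a b + beta a' b.
Proof. exact: (linD (bilin_linearl b)). Qed.
Lemma bilinZl c a b : beta (c *: a) b = c *: beta a b.
Proof. exact: (linZ (bilin_linearl b)). Qed.
Lemma bilinNl a b : beta (- a) b = - beta a b.
Proof. exact: (linN (bilin_linearl b)). Qed.

Lemma bilin_mull_subproof a : bilinearAA (fun x y => beta (a * x) y).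
Proof.
split=> c x x' y; last exact: bilin_linearr.
by rewrite mulrDr -scalerAr; apply: bilin_linearl.
Qed.
Definition bilin_mull a := Bilin (bilin_mull_subproof a).

Lemma bilin_mulr_subproof a : bilinearAA (fun x y => beta x (y * a)).
Proof.
split=> c x x' y; first exact: bilin_linearl.
by rewrite mulrDl -scalerAl; apply: bilin_linearr.
Qed.
Definition bilin_mulr a := Bilin (bilin_mulr_subproof a).
End BilinearMaps.

Lemma mul_bilinear : bilinearAA ( *%R : A -> A -> A).
Proof. by split=> c a a' b; rewrite ?mulrDl ?mulrDr -?scalerAl -?scalerAr. Qed.

Definition tsum (N : lmodType R) (beta : A -> A -> N) (s : tens A) : N :=
  \sum_(p <- s) beta p.1 p.2.

Lemma teqP (s t : tens A) :
  teq s t <-> forall (N : lmodType R) (beta : bilin N), tsum beta s = tsum beta t.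
Proof.
split=> [h N beta | h N beta hb]; first exact: h (bilin_bilinear beta).
exact: h N (Bilin hb).
Qed.

Lemma teq_sym (s t : tens A) : teq s t -> teq t s.
Proof. by move=> h N beta hb; rewrite (h N beta hb). Qed.
Lemma teq_trans (s t u : tens A) : teq s t -> teq t u -> teq s u.
Proof. by move=> h1 h2 N beta hb; rewrite (h1 N beta hb) (h2 N beta hb). Qed.

Lemma tsum_cat (N : lmodType R) (beta : A -> A -> N) (s t : tens A) :
  tsum beta (s ++ t) = tsum beta s + tsum beta t.
Proof. exact: big_cat. Qed.

Lemma tsum_scale (N : lmodType R) (beta : bilin N) c (s : tens A) :
  tsum beta (tscale c s) = c *: tsum beta s.
Proof. by rewrite /tsum big_map scaler_sumr; apply: eq_bigr => p _; apply: bilinZl. Qed.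

Lemma eq_tsum (N : lmodType R) (beta gamma : A -> A -> N) (s : tens A) :
  (forall x y, beta x y = gamma x y) -> tsum beta s = tsum gamma s.
Proof. by move=> bg; apply: eq_bigr => p _; apply: bg. Qed.

Lemma tsum_mullD (N : lmodType R) (beta : bilin N) c a a' (s : tens A) :
  tsum (bilin_mull beta (c *: a + a')) s
  = c *: tsum (bilin_mull beta a) s + tsum (bilin_mull beta a') s.
Proof.
rewrite /tsum scaler_sumr -big_split; apply: eq_bigr => p _ /=.
by rewrite mulrDl -scalerAl bilinDl bilinZl.
Qed.

Lemma tsum_mulrD (N : lmodType R) (beta : bilin N) c a a' (s : tens A) :
  tsum (bilin_mulr beta (c *: a + a')) s
  = c *: tsum (bilin_mulr beta a) s + tsum (bilin_mulr beta a') s.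
Proof.
rewrite /tsum scaler_sumr -big_split; apply: eq_bigr => p _ /=.
by rewrite mulrDr -scalerAr (linD (bilin_linearr _ _)) (linZ (bilin_linearr _ _)).
Qed.

Definition lact (a : A) (s : tens A) : tens A := [seq (a * p.1, p.2) | p <- s].
Definition ract (s : tens A) (a : A) : tens A := [seq (p.1, p.2 * a) | p <- s].

Lemma tsum_lact (N : lmodType R) (beta : bilin N) a (s : tens A) :
  tsum beta (lact a s) = tsum (bilin_mull beta a) s.
Proof. exact: big_map. Qed.
Lemma tsum_ract (N : lmodType R) (beta : bilin N) a (s : tens A) :
  tsum beta (ract s a) = tsum (bilin_mulr beta a) s.
Proof. exact: big_map. Qed.

Lemma lactM a b (s : tens A) : lact (a * b) s = lact a (lact b s).
Proof. by rewrite /lact -map_comp; apply: eq_map => p; rewrite /= mulrA. Qed.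
Lemma lact_ract a b (s : tens A) : lact a (ract s b) = ract (lact a s) b.
Proof. by rewrite /lact /ract -!map_comp. Qed.

Lemma teq_lact a (s t : tens A) : teq s t -> teq (lact a s) (lact a t).
Proof. by move=> /teqP h; apply/teqP => N beta; rewrite !tsum_lact. Qed.

Lemma tmul_teq (s t : tens A) : teq s t -> tmul s = tmul t.
Proof. by move=> h; apply: h mul_bilinear. Qed.
Lemma tmul_cat (s t : tens A) : tmul (s ++ t) = tmul s + tmul t.
Proof. exact: tsum_cat. Qed.
Lemma tmul_scale c (s : tens A) : tmul (tscale c s) = c *: tmul s.
Proof. exact: (tsum_scale (Bilin mul_bilinear)). Qed.
Lemma tmul_lact a (s : tens A) : tmul (lact a s) = a * tmul s.
Proof. by rewrite /tmul big_map mulr_sumr; apply: eq_bigr => p _; rewrite mulrA. Qed.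
Lemma tmul_ract a (s : tens A) : tmul (ract s a) = tmul s * a.
Proof. by rewrite /tmul big_map mulr_suml; apply: eq_bigr => p _; rewrite mulrA. Qed.

Definition separability_element (e : tens A) :=
  tmul e = 1 /\ forall a, teq (lact a e) (ract e a).

Lemma nearly_frobenius_separability (D : A -> tens A) :
  nearly_frobenius D -> normalized D -> separability_element (D 1).
Proof.
move=> [_ DM] Dn; split=> [|a]; first exact: Dn.
have [_ Dl] := DM a 1; have [Dr _] := DM 1 a.
by rewrite mulr1 in Dl; rewrite mul1r in Dr; apply: teq_trans (teq_sym Dl) Dr.
Qed.

Lemma separability_nearly_frobenius e : separability_element e ->
  nearly_frobenius (lact^~ e) /\ normalized (lact^~ e).
Proof.
move=> [e1 eC]; split=> [|a]; last by rewrite tmul_lact e1 mulr1.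
split=> [c a b | a b]; last split.
- by apply/teqP => N beta; rewrite tsum_cat tsum_scale !tsum_lact tsum_mullD.
- change (teq (lact (a * b) e) (ract (lact a e) b)).
  by rewrite lactM -lact_ract; apply/teq_lact/eC.
- by rewrite lactM.
Qed.

End TensorSquare.

Section OrdinalCons.
Variable T : Type.

Definition ocons n (y : T) (x : 'I_n -> T) : 'I_n.+1 -> T :=
  fun j => if unlift ord0 j is Some k then x k else y.

Lemma ocons0 n y (x : 'I_n -> T) : ocons y x ord0 = y.
Proof. by rewrite /ocons unlift_none. Qed.

Lemma ocons_lift n y (x : 'I_n -> T) k : ocons y x (lift ord0 k) = x k.
Proof. by rewrite /ocons liftK. Qed.

Lemma oconsS n y (x : 'I_n -> T) (j : 'I_n.+1) (k : 'I_n) :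
  val j = (val k).+1 -> ocons y x j = x k.
Proof.
move=> jk; rewrite -[x k](ocons_lift y); congr (ocons y x _).
by apply: val_inj; rewrite /= /bump jk.
Qed.

Lemma ocons_behead n y (x : 'I_n -> T) : (fun j => ocons y x (lift ord0 j)) = x.
Proof. by apply: functional_extensionality => j; apply: ocons_lift. Qed.

Lemma ocons_max n y (x : 'I_n.+1 -> T) : ocons y x ord_max = x ord_max.
Proof. exact: oconsS. Qed.

Lemma ocons_widen n y (x : 'I_n.+1 -> T) :
  (fun j => ocons y x (widen_ord (leqnSn n.+1) j))
  = ocons y (fun j => x (widen_ord (leqnSn n) j)).
Proof.
apply: functional_extensionality => j; case: (unliftP ord0 j) => [k ->|->].
  by rewrite ocons_lift; apply: oconsS (widen_ord _ k) _.
by rewrite ocons0 (_ : widen_ord _ _ = ord0) ?ocons0 //; apply: val_inj.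
Qed.

Lemma ocons_inord0 n y (x : 'I_n -> T) : ocons y x (inord 0) = y.
Proof. by rewrite (_ : inord 0 = ord0) ?ocons0 //; apply: val_inj; rewrite /= inordK. Qed.

Lemma ocons_inordS n y (x : 'I_n.+1 -> T) m :
  (m <= n)%N -> ocons y x (inord m.+1) = x (inord m).
Proof. by move=> le_mn; apply: oconsS; rewrite /= !inordK. Qed.

End OrdinalCons.

Section Cochains.
Variables (R : fieldType) (A : algType R).

Lemma merge_ocons0 n y (x : 'I_n.+1 -> A) :
  Defs.merge (ocons y x) 0 = ocons (y * x ord0) (fun j => x (lift ord0 j)).
Proof.
apply: functional_extensionality => j; rewrite /Defs.merge.
case: (unliftP ord0 j) => [k ->|->] /=; last first.
  rewrite ocons0 ocons_inord0 ocons_inordS // (_ : inord 0 = ord0) //.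
  by apply: val_inj; rewrite /= inordK.
rewrite ocons_lift ocons_inordS ?ltn_ord //; congr x; apply: val_inj.
by rewrite /= inordK // /bump add1n ltnS.
Qed.

Lemma merge_oconsS n y (x : 'I_n.+1 -> A) i :
  Defs.merge (ocons y x) i.+1 = ocons y (Defs.merge x i).
Proof.
apply: functional_extensionality => j; rewrite /Defs.merge.
case: (unliftP ord0 j) => [k ->|->] /=; last by rewrite ocons0 ocons_inord0.
by rewrite ocons_lift /bump /= ltnS eqSS !ocons_inordS // ltnW.
Qed.

Lemma ocons_upd n y (x : 'I_n -> A) i v :
  ocons y (upd x i v) = upd (ocons y x) (lift ord0 i) v.
Proof.
apply: functional_extensionality => j; rewrite /upd.
case: (unliftP ord0 j) => [k ->|->]; last by rewrite !ocons0 (negbTE (neq_lift _ _)).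
by rewrite !ocons_lift (inj_eq (@lift_inj _ ord0)).
Qed.

Lemma upd_ocons0 n y (x : 'I_n -> A) v : upd (ocons y x) ord0 v = ocons v x.
Proof.
apply: functional_extensionality => j; rewrite /upd.
case: (unliftP ord0 j) => [k ->|->]; last by rewrite eqxx ocons0.
by rewrite eq_sym (negbTE (neq_lift _ _)) !ocons_lift.
Qed.

Lemma multilinear_ocons (M : lmodType R) n (f : ('I_n.+1 -> A) -> M) x :
  multilinear f -> linear (fun y => f (ocons y x)).
Proof.
move=> fml c y y'.
by rewrite -(upd_ocons0 0 x (c *: y + y')) -(upd_ocons0 0 x y) -(upd_ocons0 0 x y') fml.
Qed.

End Cochains.

Section Homotopy.
Variables (R : fieldType) (A : algType R) (M : lmodType R).
Variables (la : A -> M -> M) (ra : M -> A -> M).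
Hypothesis la_linearl : forall m, linear (la^~ m).
Hypothesis la_linear : forall a, linear (la a).
Hypothesis ra_linear : forall a, linear (ra^~ a).
Hypothesis laM : forall a b m, la (a * b) m = la a (la b m).
Hypothesis la1 : forall m, la 1 m = m.
Hypothesis la_ra : forall a b m, la a (ra m b) = ra (la a m) b.

Local Notation d := (hoch_d la ra).

Lemma hoch_d_ocons n (f : ('I_n.+1 -> A) -> M) y x :
  d f (ocons y x) = la y (f x) - f (ocons (y * x ord0) (fun j => x (lift ord0 j)))
    - \sum_(i < n) (-1) ^+ i.+1 *: f (ocons y (Defs.merge x i))
    - (-1) ^+ n.+1 *: ra (f (ocons y (fun j => x (widen_ord (leqnSn n) j)))) (x ord_max).
Proof.
rewrite /hoch_d ocons0 ocons_behead big_ord_recl merge_ocons0 ocons_widen ocons_max.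
rewrite expr1 scaleN1r [(-1) ^+ n.+2]exprS mulN1r scaleNr -sumrN !addrA.
congr (_ + _ + _); apply: eq_bigr => i _.
by rewrite (merge_oconsS y x i) exprS mulN1r scaleNr.
Qed.

Variable e : tens A.
Hypothesis e_sep : separability_element e.

Definition hoch_h n (f : ('I_n.+1 -> A) -> M) : ('I_n -> A) -> M :=
  fun x => \sum_(p <- e) la p.1 (f (ocons p.2 x)).

Lemma hoch_h_multilinear n (f : ('I_n.+1 -> A) -> M) :
  multilinear f -> multilinear (hoch_h f).
Proof.
move=> fml x i c a b; rewrite /hoch_h scaler_sumr -big_split; apply: eq_bigr => p _ /=.
by rewrite !ocons_upd fml la_linear.
Qed.

Lemma separability_la_unit m : \sum_(p <- e) la p.1 (la p.2 m) = m.
Proof.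
under eq_bigr do rewrite -laM.
by rewrite -(lin_sum (la_linearl m)) -[X in la X m]/(tmul e) e_sep.1 la1.
Qed.

Lemma separability_la_commute n (f : ('I_n.+1 -> A) -> M) a x : multilinear f ->
  \sum_(p <- e) la p.1 (f (ocons (p.2 * a) x))
  = la a (\sum_(p <- e) la p.1 (f (ocons p.2 x))).
Proof.
move=> fml; pose beta := fun u v => la u (f (ocons v x)).
have beta_bilinear : bilinearAA beta.
  split=> [c u u' v | c u v v']; first exact: la_linearl.
  by rewrite /beta (multilinear_ocons x fml) la_linear.
rewrite (lin_sum (la_linear a)); under [RHS]eq_bigr do rewrite -laM.
by have := e_sep.2 a _ _ beta_bilinear; rewrite !big_map.
Qed.

Lemma hoch_h_hoch_d n (f : ('I_n.+1 -> A) -> M) x : multilinear f ->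
  hoch_h (d f) x = f x - d (hoch_h f) x.
Proof.
move=> fml; rewrite /hoch_h; under eq_bigr do rewrite hoch_d_ocons !(linB (la_linear _)).
rewrite !sumrB separability_la_unit separability_la_commute //.
have merge_terms :
    \sum_(p <- e) la p.1 (\sum_(i < n) (-1) ^+ i.+1 *: f (ocons p.2 (Defs.merge x i)))
    = \sum_(i < n) (-1) ^+ i.+1 *: hoch_h f (Defs.merge x i).
  under eq_bigr do rewrite (lin_sum (la_linear _)).
  rewrite exchange_big; apply: eq_bigr => i _; rewrite /hoch_h scaler_sumr.
  by apply: eq_bigr => p _; rewrite (linZ (la_linear _)).
have last_term : forall w c b, \sum_(p <- e) la p.1 (c *: ra (f (ocons p.2 w)) b)
    = c *: ra (hoch_h f w) b.
  move=> w c b; under eq_bigr do rewrite (linZ (la_linear _)) la_ra.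
  by rewrite -scaler_sumr -(lin_sum (ra_linear b)).
by rewrite merge_terms last_term /hoch_d /hoch_h !opprD !addrA.
Qed.

Lemma hoch_cocycle_coboundary n (f : ('I_n.+1 -> A) -> M) : multilinear f ->
  (forall x, d f x = 0) -> forall x, f x = d (hoch_h f) x.
Proof.
move=> fml fcoc x; apply/eqP; rewrite -subr_eq0 -hoch_h_hoch_d //.
by rewrite /hoch_h big1 // => p _; rewrite fcoc (lin0 (la_linear _)).
Qed.

End Homotopy.

Lemma separability_hochschild_dim0 (R : fieldType) (A : algType R) (e : tens A) :
  separability_element e -> hochschild_dim0 A.
Proof.
move=> e_sep M la ra [laDl [laDr [_ [raDl [laM [la1 [_ [_ la_ra]]]]]]]] n f fml fcoc.
have la_linearl m : linear (la^~ m) by move=> c a a'; apply: laDl.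
have ra_linear a : linear (ra^~ a) by move=> c m m'; apply: raDl.
have la_linear a : linear (la a) by move=> c m m'; apply: laDr.
exists (hoch_h la e f); split; first exact: hoch_h_multilinear.
exact: hoch_cocycle_coboundary.
Qed.

Section KernelOfMultiplication.
Variables (R : fieldType) (A : algType R).

(* A (x) A is the quotient of formal sums by [teq]; a class is represented by the
   formal sum that [epsilon] picks in it, so representatives are equal iff [teq]. *)
Definition tens_repr (s : tens A) : tens A := epsilon (inhabits [::]) (teq s).

Lemma tens_reprP (s : tens A) : teq s (tens_repr s).
Proof. exact: epsilon_spec (ex_intro _ s (fun _ _ _ => erefl)). Qed.

Lemma tens_repr_teq (s t : tens A) : teq s t -> tens_repr s = tens_repr t.
Proof.
move=> st; rewrite /tens_repr (_ : teq s = teq t) //.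
apply: functional_extensionality => u; apply: propositional_extensionality.
by split; [apply: teq_trans (teq_sym st) | apply: teq_trans st].
Qed.

Definition omega_mem (s : tens A) : bool := (tens_repr s == s) && (tmul s == 0).
Definition Omega := {s : tens A | omega_mem s}.
HB.instance Definition _ := Choice.on Omega.

Lemma omega_tens_repr (s : tens A) : tmul s = 0 -> omega_mem (tens_repr s).
Proof.
move=> s0; rewrite /omega_mem -(tens_repr_teq (tens_reprP s)) eqxx /=.
by rewrite -(tmul_teq (tens_reprP s)) s0.
Qed.

Definition omega0 : Omega := Sub (tens_repr [::]) (omega_tens_repr (big_nil _ _ _ _)).
Definition omega_of (s : tens A) : Omega := insubd omega0 (tens_repr s).

Lemma omega_tmul (u : Omega) : tmul (val u) = 0.
Proof. by case: u => s /= /andP[_ /eqP]. Qed.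

Lemma omega_ext (u v : Omega) :
  (forall (N : lmodType R) (beta : bilin A N), tsum beta (val u) = tsum beta (val v)) -> u = v.
Proof.
move=> /teqP uv; apply: val_inj; move: uv.
by case: u v => [s /andP[/eqP cs _]] [t /andP[/eqP ct _]] /= /tens_repr_teq; rewrite cs ct.
Qed.

Section Tsum.
Variables (N : lmodType R) (beta : bilin A N).

Lemma tsum_omega_of (s : tens A) : tmul s = 0 -> tsum beta (val (omega_of s)) = tsum beta s.
Proof.
move=> s0; rewrite val_insubd omega_tens_repr //.
by symmetry; apply: tens_reprP (bilin_bilinear beta).
Qed.

Lemma tsum_omega0 : tsum beta (val omega0) = 0.
Proof. by rewrite /tsum /= -(tens_reprP [::] (bilin_bilinear beta)) big_nil. Qed.

Definition omega_add (u v : Omega) : Omega := omega_of (val u ++ val v).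
Definition omega_scale c (u : Omega) : Omega := omega_of (tscale c (val u)).
Definition omega_opp (u : Omega) : Omega := omega_scale (-1) u.
Definition omega_lact a (u : Omega) : Omega := omega_of (lact a (val u)).
Definition omega_ract (u : Omega) a : Omega := omega_of (ract (val u) a).

Lemma tsum_omega_add u v : tsum beta (val (omega_add u v)) = tsum beta (val u) + tsum beta (val v).
Proof. by rewrite tsum_omega_of ?tsum_cat // tmul_cat !omega_tmul addr0. Qed.

Lemma tsum_omega_scale c u : tsum beta (val (omega_scale c u)) = c *: tsum beta (val u).
Proof. by rewrite tsum_omega_of ?tsum_scale // tmul_scale omega_tmul scaler0. Qed.

Lemma tsum_omega_opp u : tsum beta (val (omega_opp u)) = - tsum beta (val u).
Proof. by rewrite tsum_omega_scale scaleN1r. Qed.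

Lemma tsum_omega_lact a u : tsum beta (val (omega_lact a u)) = tsum (bilin_mull beta a) (val u).
Proof. by rewrite tsum_omega_of ?tsum_lact // tmul_lact omega_tmul mulr0. Qed.

Lemma tsum_omega_ract a u : tsum beta (val (omega_ract u a)) = tsum (bilin_mulr beta a) (val u).
Proof. by rewrite tsum_omega_of ?tsum_ract // tmul_ract omega_tmul mul0r. Qed.

End Tsum.

Lemma omega_addA : associative omega_add.
Proof. by move=> u v w; apply: omega_ext => N beta; rewrite !tsum_omega_add addrA. Qed.
Lemma omega_addC : commutative omega_add.
Proof. by move=> u v; apply: omega_ext => N beta; rewrite !tsum_omega_add addrC. Qed.
Lemma omega_add0l : left_id omega0 omega_add.
Proof. by move=> u; apply: omega_ext => N beta; rewrite tsum_omega_add tsum_omega0 add0r. Qed.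
Lemma omega_addNl : left_inverse omega0 omega_opp omega_add.
Proof.
by move=> u; apply: omega_ext => N beta; rewrite tsum_omega_add tsum_omega_opp tsum_omega0 addNr.
Qed.

HB.instance Definition _ :=
  GRing.isZmodule.Build Omega omega_addA omega_addC omega_add0l omega_addNl.

Lemma omega_scaleA a b u : omega_scale a (omega_scale b u) = omega_scale (a * b) u.
Proof. by apply: omega_ext => N beta; rewrite !tsum_omega_scale scalerA. Qed.
Lemma omega_scale1 : left_id 1 omega_scale.
Proof. by move=> u; apply: omega_ext => N beta; rewrite tsum_omega_scale scale1r. Qed.
Lemma omega_scaleDr : right_distributive omega_scale omega_add.
Proof.
by move=> c u v; apply: omega_ext => N beta; rewrite !(tsum_omega_scale, tsum_omega_add) scalerDr.
Qed.
Lemma omega_scaleDl u : {morph omega_scale^~ u : a b / a + b >-> omega_add a b}.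
Proof.
by move=> a b; apply: omega_ext => N beta; rewrite !(tsum_omega_scale, tsum_omega_add) scalerDl.
Qed.

HB.instance Definition _ :=
  GRing.Zmodule_isLmodule.Build R Omega omega_scaleA omega_scale1 omega_scaleDr omega_scaleDl.

Definition tsum_omegaE := (tsum_omega0, tsum_omega_add, tsum_omega_opp, tsum_omega_scale,
  tsum_omega_lact, tsum_omega_ract).

Lemma omega_bimodule : bimodule omega_lact omega_ract.
Proof.
(do ![split]) => *; apply: omega_ext => N beta;
  rewrite !tsum_omegaE ?tsum_mullD ?tsum_mulrD //;
  by apply: eq_tsum => x y /=; rewrite ?mulrA ?mul1r ?mulr1.
Qed.

End KernelOfMultiplication.

Section UniversalDerivation.
Variables (R : fieldType) (A : algType R).

Definition univ_der (x : 'I_1 -> A) : Omega A := omega_of [:: (x ord0, 1); (-1, x ord0)].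

Lemma tsum_univ_der (N : lmodType R) (beta : bilin A N) x :
  tsum beta (val (univ_der x)) = beta (x ord0) 1 - beta 1 (x ord0).
Proof.
rewrite tsum_omega_of; first by rewrite /tsum !big_cons big_nil addr0 bilinNl.
by rewrite /tmul !big_cons big_nil /= mulr1 mulN1r addr0 subrr.
Qed.

Lemma univ_der_multilinear : multilinear univ_der.
Proof.
move=> x i c a b; apply: omega_ext => N beta; rewrite !tsum_omegaE !tsum_univ_der.
rewrite /upd (ord1 i) eqxx bilinDl bilinZl (linD (bilin_linearr _ _)) (linZ (bilin_linearr _ _)).
by rewrite scalerBr opprD addrACA.
Qed.

Lemma univ_der_cocycle x : hoch_d (@omega_lact _ A) (@omega_ract _ A) univ_der x = 0.
Proof.
apply: omega_ext => N beta; rewrite /hoch_d big_ord1 !tsum_omegaE !tsum_univ_der /=.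
have -> : lift ord0 (ord0 : 'I_1) = ord_max by apply: val_inj.
have -> : widen_ord (leqnSn 1) (ord0 : 'I_1) = ord0 by apply: val_inj.
rewrite /Defs.merge /=.
have -> : inord 0 = ord0 :> 'I_2 by apply: val_inj; rewrite /= inordK.
have -> : inord 1 = ord_max :> 'I_2 by apply: val_inj; rewrite /= inordK.
rewrite expr2 mulN1r opprK scale1r mulr1 mul1r.
by rewrite (addrC (beta _ 1)) addrKA opprK addrACA addNr subrr addr0.
Qed.

Lemma zero_cochain_eq (M : Type) (g : ('I_0 -> A) -> M) (x y : 'I_0 -> A) : g x = g y.
Proof. by congr g; apply: functional_extensionality => -[]. Qed.

Lemma hochschild_dim0_separability :
  hochschild_dim0 A -> exists e : tens A, separability_element e.
Proof.
move=> dim0.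
have [g [_ g_der]] := dim0 _ _ _ (@omega_bimodule _ A) 0 _ univ_der_multilinear univ_der_cocycle.
pose w := g (fun=> 0).
have univ_der_inner a : univ_der (fun=> a) = omega_lact a w - omega_ract w a.
  by rewrite g_der /hoch_d big_ord0 addr0 expr1 scaleN1r /w !(zero_cochain_eq g _ (fun=> 0)).
exists ((1, 1) :: tscale (-1) (val w)); split.
  by rewrite /tmul big_cons -/(tmul _) tmul_scale omega_tmul scaler0 mulr1 addr0.
move=> a; apply/teqP => N beta.
have := congr1 (fun u => tsum beta (val u)) (univ_der_inner a).
rewrite /= tsum_univ_der !tsum_omegaE => inner_a.
rewrite /tsum !big_cons -!/(tsum _ _) tsum_lact tsum_ract !tsum_scale !scaleN1r /= mulr1 mul1r.
by rewrite -[beta a 1](subrK (beta 1 a)) inner_a addrAC (addrAC (tsum _ _)) subrr add0r addrC.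
Qed.

End UniversalDerivation.

Theorem proposition27 (R : fieldType) (A : algType R) :
  (exists D : A -> tens A, nearly_frobenius D /\ normalized D) <-> hochschild_dim0 A.
Proof.
split=> [[D [D_nf D_n]] | dim0].
  exact: separability_hochschild_dim0 (nearly_frobenius_separability D_nf D_n).
have [e e_sep] := hochschild_dim0_separability dim0.
by exists (fun a => lact a e); apply: separability_nearly_frobenius.
Qed.
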